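(* For all integers $k_1,k_2,n_3$, the following identity holds in $\mathcal{F}$: $$R_{12}^{-1,k_2+1,n_3}+A^{2}R_{12}^{0,k_2,n_3-1}+A^2R_{12}^{0,k_2,n_3+1}+A^{4}R_{12}^{1,k_2-1,n_3}=0.$$
   Context: $\mathcal{F}$ is the free $\mathbb{Z}[A^{\pm1}]$-module with basis the symbols $s_1^{l_1}s_2^{l_2}s_3^{l_3}$, $l_i\ge 0$, extended multilinearly to integer exponents by $s_i^{-1}=0$ and $s_i^{n}=-s_i^{-n-2}$ for $n\le -2$. For $n_i\in\mathbb{Z}$, $R_{12}(n_1,n_2,n_3)=-A^{-n_1-n_2-2}s_1^{n_1}s_2^{n_2}s_3^{n_3}-A^{-n_1-n_2+2}s_1^{n_1-2}s_2^{n_2-2}s_3^{n_3}-A^{-n_1-n_2}s_1^{n_1-1}s_2^{n_2-1}s_3^{n_3+1}-A^{-n_1-n_2}s_1^{n_1-1}s_2^{n_2-1}s_3^{n_3-1}$, and $R_{12}^{n_1,n_2,n_3}=R_{12}(n_1,n_2,n_3)-R_{12}(-n_1+k_1,-n_2+k_2,n_3)$. *)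

From mathcomp Require Import all_boot all_algebra.
Set Implicit Arguments. Unset Strict Implicit. Unset Printing Implicit Defensive.
Import GRing.Theory Num.Theory.
Local Open Scope ring_scope.

(* The module F: the free Z[A^{+-1}]-module with basis s1^l1 s2^l2 s3^l3
   (l_i >= 0).  An element is represented by its coefficient function:
   (f l1 l2 l3 e) is the integer coefficient of A^e s1^l1 s2^l2 s3^l3.
   (Elements of F are the finitely supported such functions; F embeds in
   this function space, so identities are the same.) *)
Definition F := nat -> nat -> nat -> int -> int.

Definition zeroF : F := fun _ _ _ _ => 0.
Definition addF (f g : F) : F := fun a b c e => f a b c e + g a b c e.
Definition oppF (f : F) : F := fun a b c e => - f a b c e.
Definition scaleA (m : int) (f : F) : F := fun a b c e => f a b c (e - m).

(* Extension of s_i^n to integer n: s^n = s^n for n >= 0, s^{-1} = 0,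
   s^n = - s^{-n-2} for n <= -2.  Returned as (sign, exponent) or None (=0). *)
Definition red (n : int) : option (int * nat) :=
  match n with
  | Posz m => Some (1, m)
  | Negz 0 => None
  | Negz m.+1 => Some (-1, m)   (* n = -m-2, so -n-2 = m *)
  end.

Definition monoF (e n1 n2 n3 : int) : F :=
  match red n1, red n2, red n3 with
  | Some (c1, l1), Some (c2, l2), Some (c3, l3) =>
      fun a b c k =>
        if [&& a == l1, b == l2, c == l3 & k == e] then c1 * c2 * c3 else 0
  | _, _, _ => zeroF
  end.

Definition R12 (n1 n2 n3 : int) : F :=
  addF (oppF (monoF (- n1 - n2 - 2) n1 n2 n3))
  (addF (oppF (monoF (- n1 - n2 + 2) (n1 - 2) (n2 - 2) n3))
  (addF (oppF (monoF (- n1 - n2) (n1 - 1) (n2 - 1) (n3 + 1)))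
        (oppF (monoF (- n1 - n2) (n1 - 1) (n2 - 1) (n3 - 1))))).

Definition R12sup (k1 k2 n1 n2 n3 : int) : F :=
  addF (R12 n1 n2 n3) (oppF (R12 (- n1 + k1) (- n2 + k2) n3)).

From mathcomp Require Import all_boot all_algebra ring.
From Stdlib Require Import FunctionalExtensionality.
Import GRing.Theory.
Local Open Scope ring_scope.

(* Call [diamond R n1 n2 n3] the combination of R at the four points
   (n1-1, n2+1, n3), (n1, n2, n3-1), (n1, n2, n3+1), (n1+1, n2-1, n3) with
   weights 1, A^2, A^2, A^4.  Since R12^{n1,n2,n3} is R12(n1,n2,n3) minus
   R12(k1-n1, k2-n2, n3), the identity is the diamond of R12 around (0, k2)
   minus the diamond of the reflected terms, which is the diamond of R12 around
   (k1, 0), i.e. the image under s1 <-> s2 of the diamond around (0, k1).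
   So everything reduces to the diamond of R12 at n1 = 0, which vanishes by
   direct expansion: the rules s1^-1 = 0 and s1^-n = - s1^(n-2) kill or flip
   the monomials with negative s1-exponent, and the rest cancel in pairs. *)

Lemma F_ext (f g : F) : (forall a b c e, f a b c e = g a b c e) -> f = g.
Proof. by move=> fg; do 4![apply: functional_extensionality => ?]; apply: fg. Qed.

Lemma oppF0 : oppF zeroF = zeroF.
Proof. by apply: F_ext => a b c e; rewrite /oppF oppr0. Qed.

Lemma addF0l f : addF zeroF f = f.
Proof. by apply: F_ext => a b c e; rewrite /addF add0r. Qed.

Lemma addF0r f : addF f zeroF = f.
Proof. by apply: F_ext => a b c e; rewrite /addF addr0. Qed.

Lemma oppFK f : oppF (oppF f) = f.
Proof. by apply: F_ext => a b c e; rewrite /oppF opprK. Qed.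

Lemma scaleA_add m f g : scaleA m (addF f g) = addF (scaleA m f) (scaleA m g).
Proof. by []. Qed.

Lemma scaleA_opp m f : scaleA m (oppF f) = oppF (scaleA m f).
Proof. by []. Qed.

Lemma scaleA_monoF m e n1 n2 n3 :
  scaleA m (monoF e n1 n2 n3) = monoF (e + m) n1 n2 n3.
Proof.
apply: F_ext => a b c k; rewrite /scaleA /monoF.
case: (red n1) => [[c1 l1]|] //; case: (red n2) => [[c2 l2]|] //.
by case: (red n3) => [[c3 l3]|] //; rewrite subr_eq.
Qed.

Lemma monoF_N1 e n2 n3 : monoF e (-1) n2 n3 = zeroF.
Proof. by []. Qed.

Lemma monoF_NegzS e m n2 n3 :
  monoF e (Negz m.+1) n2 n3 = oppF (monoF e m n2 n3).
Proof.
apply: F_ext => a b c k; rewrite /monoF /=.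
case: (red n2) => [[c2 l2]|] //; case: (red n3) => [[c3 l3]|] //.
by rewrite /oppF; case: ifP; rewrite ?oppr0 // mulN1r mul1r mulNr.
Qed.

Definition swap12 (f : F) : F := fun a b c e => f b a c e.

Lemma swap12_add f g : swap12 (addF f g) = addF (swap12 f) (swap12 g).
Proof. by []. Qed.

Lemma swap12_opp f : swap12 (oppF f) = oppF (swap12 f).
Proof. by []. Qed.

Lemma swap12_scaleA m f : swap12 (scaleA m f) = scaleA m (swap12 f).
Proof. by []. Qed.

Lemma swap12_monoF e n1 n2 n3 : swap12 (monoF e n1 n2 n3) = monoF e n2 n1 n3.
Proof.
apply: F_ext => a b c k; rewrite /swap12 /monoF.
case: (red n1) => [[c1 l1]|] //; case: (red n2) => [[c2 l2]|] //.
case: (red n3) => [[c3 l3]|] //.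
by rewrite [c2 * c1]mulrC; case: (a == l2); case: (b == l1).
Qed.

Lemma R12_swap n1 n2 n3 : R12 n2 n1 n3 = swap12 (R12 n1 n2 n3).
Proof.
by rewrite /R12 !swap12_add !swap12_opp !swap12_monoF !(addrC (- n2)).
Qed.

Definition diamond (R : int -> int -> int -> F) (n1 n2 n3 : int) : F :=
  addF (R (n1 - 1) (n2 + 1) n3)
  (addF (scaleA 2 (R n1 n2 (n3 - 1)))
  (addF (scaleA 2 (R n1 n2 (n3 + 1)))
        (scaleA 4 (R (n1 + 1) (n2 - 1) n3)))).

Lemma diamond_sub R R' n1 n2 n3 :
  diamond (fun m1 m2 m3 => addF (R m1 m2 m3) (oppF (R' m1 m2 m3))) n1 n2 n3
  = addF (diamond R n1 n2 n3) (oppF (diamond R' n1 n2 n3)).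
Proof. by apply: F_ext => a b c e; rewrite /diamond /addF /oppF /scaleA; ring. Qed.

Lemma diamond_reflect k1 k2 n1 n2 n3 :
  diamond (fun m1 m2 => R12 (- m1 + k1) (- m2 + k2)) n1 n2 n3
  = swap12 (diamond R12 (- n2 + k2) (- n1 + k1) n3).
Proof.
(* the counts keep [swap12_add] from unfolding [R12] itself *)
rewrite /diamond 3!swap12_add 3!swap12_scaleA -!R12_swap.
by congr (addF (R12 _ _ _) (addF (scaleA _ (R12 _ _ _))
  (addF (scaleA _ (R12 _ _ _)) (scaleA _ (R12 _ _ _))))); ring.
Qed.

Ltac expand_R12 :=
  rewrite /R12 ?scaleA_add ?scaleA_opp ?scaleA_monoF ?monoF_N1 ?monoF_NegzS
          ?addF0l ?addF0r ?oppFK.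

Ltac congr_monoF := lazymatch goal with
  | |- addF _ _ = addF _ _ => congr addF; congr_monoF
  | |- oppF _ = oppF _ => congr oppF; congr_monoF
  | |- monoF _ _ _ _ = monoF _ _ _ _ => congr monoF; ring
  end.

Lemma R12_N1 m n : R12 (-1) (m + 1) n =
  addF (monoF (- m + 2) 1 (m - 1) n)
  (addF (monoF (- m) 0 m (n + 1)) (monoF (- m) 0 m (n - 1))).
Proof. by expand_R12; congr_monoF. Qed.

Lemma R12_0 m n : scaleA 2 (R12 0 m n) =
  addF (oppF (monoF (- m) 0 m n)) (monoF (- m + 4) 0 (m - 2) n).
Proof. by expand_R12; congr_monoF. Qed.

Lemma R12_1 m n : scaleA 4 (R12 1 (m - 1) n) =
  addF (oppF (monoF (- m + 2) 1 (m - 1) n))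
  (addF (oppF (monoF (- m + 4) 0 (m - 2) (n + 1)))
        (oppF (monoF (- m + 4) 0 (m - 2) (n - 1)))).
Proof. by expand_R12; congr_monoF. Qed.

Lemma diamond_R12_0 m n : diamond R12 0 m n = zeroF.
Proof.
rewrite /diamond R12_N1 !R12_0 R12_1.
by apply: F_ext => a b c e; rewrite /addF /oppF /zeroF; ring.
Qed.

Theorem lemma3p6 (k1 k2 n3 : int) :
  addF (R12sup k1 k2 (-1) (k2 + 1) n3)
  (addF (scaleA 2 (R12sup k1 k2 0 k2 (n3 - 1)))
  (addF (scaleA 2 (R12sup k1 k2 0 k2 (n3 + 1)))
        (scaleA 4 (R12sup k1 k2 1 (k2 - 1) n3)))) = zeroF.
Proof.
change (diamond (R12sup k1 k2) 0 k2 n3 = zeroF).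
rewrite diamond_sub diamond_reflect addNr oppr0 add0r !diamond_R12_0.
by rewrite oppF0 addF0r.
Qed.
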